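(* For $\alpha\in[1/2,1)$ consider the singular initial value problem $$h'(\theta)=-\frac{1}{\sin\theta}\big(\alpha h(\theta)^2-\cos\theta\,h(\theta)+1-\alpha\big),\quad 0<\theta\le\frac{\pi}{2},\qquad h(0)=1,\qquad(\ast)$$ where a (classical) solution is a function $h\in C[0,\pi/2]\cap C^1(0,\pi/2]$ satisfying the equation on $(0,\pi/2]$ and $h(0)=1$. (i) If $\alpha\in(1/2,1)$, then $(\ast)$ has a unique solution $h(\alpha,\cdot)$; moreover, if $1/2<\alpha_1<\alpha_2<1$ then $h(\alpha_1,\theta)<h(\alpha_2,\theta)$ for all $\theta\in(0,\pi/2]$. (ii) If $\alpha=1/2$, then $(\ast)$ has infinitely many (a continuum of) positive solutions. (iii) Let $\alpha\in(1/2,1)$ and let $\overline h\in C[0,\pi/2]\cap C^1(0,\pi/2]$ satisfy $\overline h'(\theta)\ge-\frac{1}{\sin\theta}\big(\alpha\overline h(\theta)^2-\cos\theta\,\overline h(\theta)+1-\alpha\big)$ for $0<\theta\le\pi/2$ and $\overline h(0)\ge1$. Then $h(\alpha,\theta)\le\overline h(\theta)$ for all $0\le\theta\le\pi/2$. *)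

From Stdlib Require Import Reals Lra.
Open Scope R_scope.

Definition Icl (x : R) : Prop := 0 <= x <= PI / 2.
Definition Iop (x : R) : Prop := 0 < x <= PI / 2.

Definition F (alpha th x : R) : R :=
  - (1 / sin th) * (alpha * x ^ 2 - cos th * x + 1 - alpha).

Definition deriv_within (f : R -> R) (D : R -> Prop) (x l : R) : Prop :=
  forall eps : R, eps > 0 -> exists delta : R, delta > 0 /\
    forall y : R, D y -> y <> x -> Rabs (y - x) < delta ->
      Rabs ((f y - f x) / (y - x) - l) < eps.

Definition C0C1 (h hd : R -> R) : Prop :=
  (forall x, Icl x -> continue_in h Icl x) /\
  (forall x, Iop x -> deriv_within h Icl x (hd x) /\ continue_in hd Iop x).

Definition is_solution (alpha : R) (h : R -> R) : Prop :=
  exists hd : R -> R, C0C1 h hd /\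
    (forall th, Iop th -> hd th = F alpha th (h th)) /\ h 0 = 1.

Definition is_supersolution (alpha : R) (h : R -> R) : Prop :=
  exists hd : R -> R, C0C1 h hd /\
    (forall th, Iop th -> hd th >= F alpha th (h th)) /\ h 0 >= 1.

From Stdlib Require Import Reals Lra Psatz.
From Coquelicot Require Import Coquelicot.
Open Scope R_scope.

(* In the variable x = (1 - cos th) / 2 the equation becomes the Riccati equation
   2 x (1 - x) G' = - (al G ^ 2 - (1 - 2 x) G + 1 - al), which the substitution
   G = 1 - 2 x + 2 x (1 - x) f' / (al f) linearises into the hypergeometric equation
   for f = 2F1(al, al; al + 1/2; x).  The Gauss series, with positive coefficients
   and radius 1, thus gives a solution on [0, 1/2], i.e. on [0, pi/2].

   For al > 1/2, the gap d = hb - h between a solution and a supersolution satisfies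
   d' >= - q d with q = (al (hb + h) - cos th) / sin th.  Since al (hb + h) - 1 >=
   2 al - 1 > 0 at th = 0, q is positive near 0 and hence bounded below by some - M
   on (0, pi/2].  So d' >= M d wherever d < 0, and d e^(-M th) cannot decrease past
   the last point where d >= 0: d never becomes negative.  This gives uniqueness,
   and monotonicity in al because the solution lies in (0, 1), where the right-hand
   side increases with al.

   For al = 1/2 the second solution f J of the hypergeometric equation, with
   J x = int_x^(1/2) dt / (t (1 - t) f ^ 2), yields the solutions
   G - 4 / (f ^ 2 (C + J)), C > 16; they all tend to 1 at 0 since
   J x >= - ln (2 x) / 2. *)

Lemma is_series_Rplus (a b : nat -> R) la lb : is_series a la -> is_series b lb ->
  is_series (fun n => a n + b n) (la + lb).
Proof. apply (is_series_plus a b la lb). Qed.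

Lemma is_series_Rscal c (a : nat -> R) l : is_series a l -> is_series (fun n => c * a n) (c * l).
Proof. apply (is_series_scal c a l). Qed.

Lemma is_series_PSeries (a : nat -> R) x : ex_pseries a x ->
  is_series (fun n => a n * x ^ n) (PSeries a x).
Proof. intros H; apply is_pseries_R, PSeries_correct, H. Qed.

Lemma PS_incr_1_eq (b : nat -> R) n :
  @eq R (PS_incr_1 b n) (match n with O => 0 | S m => b m end).
Proof. destruct n; reflexivity. Qed.

Lemma CV_radius_ge_1 (a : nat -> R) : (forall n, Rabs (a n) <= 1) ->
  forall x, Rabs x < 1 -> Rbar_lt (Rabs x) (CV_radius a).
Proof.
  intros Ha x Hx.
  destruct (CV_radius_bounded a) as [Hub _].
  assert (H1 : Rbar_le 1 (CV_radius a)).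
  { apply Hub. exists 1. intros n. rewrite pow1, Rmult_1_r. apply Ha. }
  destruct (CV_radius a) as [r| |]; simpl in *; lra.
Qed.

Lemma PSeries_nonneg (b : nat -> R) x : (forall n, 0 <= b n) -> 0 <= x ->
  ex_pseries b x -> 0 <= PSeries b x.
Proof.
  intros Hb Hx Hex. rewrite <- (PSeries_const_0 x). unfold PSeries.
  apply Series_le.
  - intros n; split; [lra|]. rewrite Rmult_0_l. apply Rmult_le_pos; auto. apply pow_le; auto.
  - now apply ex_pseries_R.
Qed.

Lemma PSeries_ge_head (b : nat -> R) x : (forall n, 0 <= b n) -> 0 <= x ->
  ex_pseries b x -> b O <= PSeries b x.
Proof.
  intros Hb Hx Hex. rewrite PSeries_decr_1 by auto.
  assert (0 <= x * PSeries (PS_decr_1 b) x); [|lra].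
  apply Rmult_le_pos; auto. apply PSeries_nonneg; auto.
  - intros n; unfold PS_decr_1; auto.
  - apply ex_pseries_decr_1; auto.
    destruct (Req_dec x 0) as [->|Hn]; [now left|right].
    exists (/ x). change (/ x * x = 1). field; auto.
Qed.

(** * The hypergeometric function 2F1(al, al; al + 1/2; x) *)

Fixpoint hgeom_coef (al : R) (n : nat) : R :=
  match n with
  | O => 1
  | S m => hgeom_coef al m * ((INR m + al) ^ 2 / ((INR m + 1) * (INR m + al + / 2)))
  end.

Definition hgeom al x := PSeries (hgeom_coef al) x.
Definition hgeom1 al x := PSeries (PS_derive (hgeom_coef al)) x.
Definition hgeom2 al x := PSeries (PS_derive (PS_derive (hgeom_coef al))) x.

Section Hypergeometric.

Variable al : R.
Hypothesis al_range : 0 < al <= 1.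

Lemma hgeom_coef_bounds n : 0 < hgeom_coef al n <= 1.
Proof.
  induction n as [|n IH]; simpl hgeom_coef; [lra|].
  pose proof (pos_INR n) as Hn.
  assert (Hq : 0 < (INR n + al) ^ 2 / ((INR n + 1) * (INR n + al + / 2)) <= 1).
  { assert (Hd : 0 < (INR n + 1) * (INR n + al + / 2)) by (apply Rmult_lt_0_compat; lra).
    split; [apply Rdiv_lt_0_compat; [apply pow_lt; lra | exact Hd]|].
    apply Rmult_le_reg_r with ((INR n + 1) * (INR n + al + / 2)); [exact Hd|].
    unfold Rdiv. rewrite Rmult_assoc, Rinv_l, Rmult_1_r by lra. nra. }
  split; nra.
Qed.

Lemma hgeom_radius x : Rabs x < 1 -> Rbar_lt (Rabs x) (CV_radius (hgeom_coef al)).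
Proof.
  apply CV_radius_ge_1. intros n; destruct (hgeom_coef_bounds n).
  rewrite Rabs_pos_eq; lra.
Qed.

Lemma ex_pseries_hgeom x : Rabs x < 1 -> ex_pseries (hgeom_coef al) x.
Proof. intros; apply CV_radius_inside, hgeom_radius; auto. Qed.

Lemma ex_pseries_hgeom1 x : Rabs x < 1 -> ex_pseries (PS_derive (hgeom_coef al)) x.
Proof. intros; apply CV_radius_inside; rewrite CV_radius_derive; apply hgeom_radius; auto. Qed.

Lemma ex_pseries_hgeom2 x : Rabs x < 1 -> ex_pseries (PS_derive (PS_derive (hgeom_coef al))) x.
Proof. intros; apply CV_radius_inside; rewrite !CV_radius_derive; apply hgeom_radius; auto. Qed.

Lemma is_derive_hgeom x : Rabs x < 1 -> is_derive (hgeom al) x (hgeom1 al x).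
Proof. intros; apply is_derive_PSeries, hgeom_radius; auto. Qed.

Lemma is_derive_hgeom1 x : Rabs x < 1 -> is_derive (hgeom1 al) x (hgeom2 al x).
Proof.
  intros; apply is_derive_PSeries. rewrite CV_radius_derive; apply hgeom_radius; auto.
Qed.

Lemma PS_derive_hgeom_coef n :
  PS_derive (hgeom_coef al) n = (INR n + 1) * hgeom_coef al (S n).
Proof. unfold PS_derive; rewrite S_INR; reflexivity. Qed.

Lemma x_hgeom1_coef n :
  @eq R (PS_incr_1 (PS_derive (hgeom_coef al)) n) (INR n * hgeom_coef al n).
Proof.
  rewrite PS_incr_1_eq. destruct n; [simpl; ring|].
  rewrite PS_derive_hgeom_coef, S_INR; ring.
Qed.

Lemma x_hgeom2_coef n : @eq R (PS_incr_1 (PS_derive (PS_derive (hgeom_coef al))) n)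
  (INR n * (INR n + 1) * hgeom_coef al (S n)).
Proof.
  rewrite PS_incr_1_eq. destruct n; [simpl; ring|].
  unfold PS_derive at 1. rewrite PS_derive_hgeom_coef, !S_INR; ring.
Qed.

Lemma xx_hgeom2_coef n :
  @eq R (PS_incr_1 (PS_incr_1 (PS_derive (PS_derive (hgeom_coef al)))) n)
    (INR n * (INR n - 1) * hgeom_coef al n).
Proof.
  rewrite PS_incr_1_eq. destruct n as [|n]; [simpl; ring|].
  rewrite x_hgeom2_coef, S_INR. ring.
Qed.

Lemma hgeom_ode x : Rabs x < 1 ->
  x * (1 - x) * hgeom2 al x + (al + / 2 - (2 * al + 1) * x) * hgeom1 al x
    - al ^ 2 * hgeom al x = 0.
Proof.
  intros Hx.
  set (a := hgeom_coef al). set (B := PS_derive a). set (A := PS_derive B).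
  pose proof (ex_pseries_hgeom x Hx) as e0.
  pose proof (ex_pseries_hgeom1 x Hx) as eB.
  pose proof (ex_pseries_hgeom2 x Hx) as eA.
  pose proof (is_series_PSeries a x e0) as s0.
  pose proof (is_series_PSeries B x eB) as s1.
  pose proof (is_series_PSeries _ x (ex_pseries_incr_1 _ _ eA)) as s3.
  pose proof (is_series_PSeries _ x (ex_pseries_incr_1 _ _ (ex_pseries_incr_1 _ _ eA))) as s4.
  pose proof (is_series_PSeries _ x (ex_pseries_incr_1 _ _ eB)) as s5.
  rewrite PSeries_incr_1 in s3, s5. rewrite !PSeries_incr_1 in s4.
  pose proof (is_series_Rplus _ _ _ _ (is_series_Rplus _ _ _ _ (is_series_Rplus _ _ _ _
    (is_series_Rplus _ _ _ _ s3 (is_series_Rscal (-1) _ _ s4))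
    (is_series_Rscal (al + /2) _ _ s1)) (is_series_Rscal (-(2*al+1)) _ _ s5))
    (is_series_Rscal (- al^2) _ _ s0)) as S.
  assert (S0 : is_series (fun n => 0 * x ^ n) (x * (1 - x) * hgeom2 al x
      + (al + / 2 - (2 * al + 1) * x) * hgeom1 al x - al ^ 2 * hgeom al x)).
  { eapply is_series_ext; [|unfold hgeom, hgeom1, hgeom2; fold a B A;
      replace (x * (1 - x) * PSeries A x + (al + / 2 - (2 * al + 1) * x) * PSeries B x
        - al ^ 2 * PSeries a x) with
      (x * PSeries A x + -1 * (x * (x * PSeries A x)) + (al + / 2) * PSeries B x
        + - (2 * al + 1) * (x * PSeries B x) + - al ^ 2 * PSeries a x) by ring; exact S].
    intros n. unfold A, B, a. simpl.
    rewrite x_hgeom2_coef, xx_hgeom2_coef, x_hgeom1_coef, PS_derive_hgeom_coef.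
    simpl hgeom_coef. pose proof (pos_INR n). field. lra. }
  rewrite <- (is_series_unique _ _ S0). exact (PSeries_const_0 x).
Qed.

Lemma hgeom_ge_1 x : 0 <= x < 1 -> 1 <= hgeom al x.
Proof.
  intros Hx. change 1 with (hgeom_coef al O). apply PSeries_ge_head; try lra.
  - intros n; destruct (hgeom_coef_bounds n); lra.
  - apply ex_pseries_hgeom; rewrite Rabs_pos_eq; lra.
Qed.

Lemma hgeom_le_geom x : 0 <= x < 1 -> hgeom al x <= / (1 - x).
Proof.
  intros Hx. assert (Hx' : Rabs x < 1) by (rewrite Rabs_pos_eq; lra).
  unfold hgeom, PSeries. rewrite <- (is_series_unique _ _ (is_series_geom x Hx')).
  apply Series_le; [|eexists; apply is_series_geom; auto].
  intros n; destruct (hgeom_coef_bounds n). pose proof (pow_le x n (proj1 Hx)). split; nra.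
Qed.

Lemma hgeom1_ge x : 0 <= x < 1 -> hgeom_coef al 1 <= hgeom1 al x.
Proof.
  intros Hx. replace (hgeom_coef al 1) with (PS_derive (hgeom_coef al) O)
    by (unfold PS_derive; simpl; ring).
  apply PSeries_ge_head; try lra.
  - intros n; rewrite PS_derive_hgeom_coef; pose proof (pos_INR n).
    destruct (hgeom_coef_bounds (S n)); nra.
  - apply ex_pseries_hgeom1; rewrite Rabs_pos_eq; lra.
Qed.

(* The coefficients of al f - (1 - x) f' are those of f scaled by
   (n + al) / (2 n + 2 al + 1), hence positive. *)
Lemma hgeom1_lt x : 0 <= x < 1 -> (1 - x) * hgeom1 al x < al * hgeom al x.
Proof.
  intros Hx. assert (Hx' : Rabs x < 1) by (rewrite Rabs_pos_eq; lra).
  set (a := hgeom_coef al). set (B := PS_derive a).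
  pose proof (is_series_PSeries a x (ex_pseries_hgeom x Hx')) as s0.
  pose proof (ex_pseries_hgeom1 x Hx') as eB.
  pose proof (is_series_PSeries B x eB) as s1.
  pose proof (is_series_PSeries _ x (ex_pseries_incr_1 _ _ eB)) as s5.
  rewrite PSeries_incr_1 in s5.
  set (e := fun n => al * a n + -1 * B n + PS_incr_1 B n).
  assert (S : is_series (fun n => e n * x ^ n) (al * hgeom al x - (1 - x) * hgeom1 al x)).
  { eapply is_series_ext; [|unfold hgeom, hgeom1; fold a B;
      replace (al * PSeries a x - (1 - x) * PSeries B x)
        with (al * PSeries a x + -1 * PSeries B x + x * PSeries B x) by ring;
      exact (is_series_Rplus _ _ _ _ (is_series_Rplus _ _ _ _
        (is_series_Rscal al _ _ s0) (is_series_Rscal (-1) _ _ s1)) s5)].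
    intros n; unfold e, B, a; simpl. ring. }
  assert (He : forall n, e n = a n * (INR n + al) * / 2 / (INR n + al + / 2)).
  { intros n; unfold e, B, a. rewrite x_hgeom1_coef, PS_derive_hgeom_coef.
    simpl hgeom_coef. pose proof (pos_INR n). field. lra. }
  assert (Hep : forall n, 0 < e n).
  { intros n; rewrite He. pose proof (pos_INR n). pose proof (hgeom_coef_bounds n).
    apply Rdiv_lt_0_compat; [|lra]. apply Rmult_lt_0_compat; [|lra].
    apply Rmult_lt_0_compat; unfold a; lra. }
  pose proof (PSeries_ge_head e x (fun n => Rlt_le _ _ (Hep n)) (proj1 Hx)
    (proj2 (ex_pseries_R e x) (ex_intro _ _ S))) as Hge.
  unfold PSeries in Hge. rewrite (is_series_unique _ _ S) in Hge.
  specialize (Hep O). lra.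
Qed.

(** * The Riccati equation *)

Definition ric (x : R) :=
  1 - 2 * x + 2 * x * (1 - x) * hgeom1 al x / (al * hgeom al x).

Definition ric' (x : R) :=
  -2 + 2 * (1 - 2 * x) * hgeom1 al x / (al * hgeom al x)
  + 2 * x * (1 - x) * (hgeom2 al x * hgeom al x - hgeom1 al x ^ 2) / (al * hgeom al x ^ 2).

Lemma is_derive_ric x : 0 <= x < 1 -> is_derive ric x (ric' x).
Proof.
  intros Hx. assert (Hx' : Rabs x < 1) by (rewrite Rabs_pos_eq; lra).
  pose proof (is_derive_hgeom x Hx') as H0. pose proof (is_derive_hgeom1 x Hx') as H1.
  pose proof (hgeom_ge_1 x Hx).
  unfold ric. auto_derive.
  - repeat split; try (eexists; eassumption). apply Rmult_integral_contrapositive; split; lra.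
  - replace (Derive (fun y => hgeom al y) x) with (hgeom1 al x)
      by (symmetry; exact (is_derive_unique _ _ _ H0)).
    replace (Derive (fun y => hgeom1 al y) x) with (hgeom2 al x)
      by (symmetry; exact (is_derive_unique _ _ _ H1)).
    unfold ric'. field. lra.
Qed.

Lemma ric_riccati x : 0 < x < 1 ->
  2 * x * (1 - x) * ric' x = - (al * ric x ^ 2 - (1 - 2 * x) * ric x + 1 - al).
Proof.
  intros Hx. pose proof (hgeom_ode x ltac:(rewrite Rabs_pos_eq; lra)) as E.
  pose proof (hgeom_ge_1 x ltac:(lra)).
  assert (E2 : hgeom2 al x = (al ^ 2 * hgeom al x
      - (al + / 2 - (2 * al + 1) * x) * hgeom1 al x) / (x * (1 - x))).
  { apply (Rmult_eq_reg_l (x * (1 - x))); [|nra]. field_simplify; nra. }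
  unfold ric', ric. rewrite E2. field. repeat split; lra.
Qed.

Lemma ric_0 : ric 0 = 1.
Proof. unfold ric, Rdiv. ring. Qed.

Lemma ric_bounds x : 1 / 2 < al -> 0 < x <= / 2 -> 0 < ric x < 1.
Proof.
  intros Hal Hx.
  pose proof (hgeom_ge_1 x ltac:(lra)). pose proof (hgeom1_ge x ltac:(lra)).
  pose proof (hgeom_coef_bounds 1). pose proof (hgeom1_lt x ltac:(lra)).
  unfold ric. split.
  - assert (0 < 2 * x * (1 - x) * hgeom1 al x / (al * hgeom al x)); [|lra].
    apply Rdiv_lt_0_compat; [|nra]. repeat apply Rmult_lt_0_compat; lra.
  - assert (2 * x * (1 - x) * hgeom1 al x / (al * hgeom al x) < 2 * x); [|lra].
    apply (Rmult_lt_reg_r (al * hgeom al x)); [nra|].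
    unfold Rdiv. rewrite Rmult_assoc, Rinv_l, Rmult_1_r by nra. nra.
Qed.

End Hypergeometric.

Lemma deriv_within_of_derivable_pt_lim f D x l :
  derivable_pt_lim f x l -> deriv_within f D x l.
Proof.
  intros H eps Heps. destruct (H eps Heps) as [d Hd].
  exists d; split; [apply cond_pos|]. intros y _ Hyx Hy.
  replace y with (x + (y - x)) at 1 by ring.
  apply Hd; [lra|exact Hy].
Qed.

Lemma derivable_pt_lim_of_deriv_within f x l :
  0 < x < PI / 2 -> deriv_within f Icl x l -> derivable_pt_lim f x l.
Proof.
  intros Hx H eps Heps. destruct (H eps Heps) as [d [Hd Hd']].
  assert (Hp : 0 < Rmin d (Rmin x (PI / 2 - x))) by (repeat apply Rmin_pos; lra).
  exists (mkposreal _ Hp). intros h Hh Hh'. simpl in Hh'.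
  pose proof (Rmin_l d (Rmin x (PI / 2 - x))). pose proof (Rmin_r d (Rmin x (PI / 2 - x))).
  pose proof (Rmin_l x (PI / 2 - x)). pose proof (Rmin_r x (PI / 2 - x)).
  replace ((f (x + h) - f x) / h) with ((f (x + h) - f x) / ((x + h) - x)) by (f_equal; ring).
  apply Hd'; unfold Icl; unfold Rabs in *; repeat destruct Rcase_abs; lra.
Qed.

Lemma deriv_within_minus f g D x lf lg :
  deriv_within f D x lf -> deriv_within g D x lg ->
  deriv_within (fun t => f t - g t) D x (lf - lg).
Proof.
  intros Hf Hg eps Heps.
  destruct (Hf (eps / 2) ltac:(lra)) as [df [Hdf Hf']].
  destruct (Hg (eps / 2) ltac:(lra)) as [dg [Hdg Hg']].
  exists (Rmin df dg); split; [apply Rmin_pos; lra|]. intros y Hy Hyx Hyd.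
  pose proof (Rmin_l df dg). pose proof (Rmin_r df dg).
  specialize (Hf' y Hy Hyx ltac:(lra)). specialize (Hg' y Hy Hyx ltac:(lra)).
  replace ((f y - g y - (f x - g x)) / (y - x) - (lf - lg))
    with (((f y - f x) / (y - x) - lf) - ((g y - g x) / (y - x) - lg))
    by (field; intro; apply Hyx; lra).
  set (qf := (f y - f x) / (y - x) - lf) in *. set (qg := (g y - g x) / (y - x) - lg) in *.
  pose proof (Rabs_triang qf (- qg)). rewrite Rabs_Ropp in *. unfold Rminus. lra.
Qed.

Lemma continue_in_of_continuity_pt f D x : continuity_pt f x -> continue_in f D x.
Proof.
  unfold continuity_pt, continue_in, limit1_in, limit_in; simpl.
  intros H eps Heps. destruct (H eps Heps) as [d [Hd Hd']].
  exists d; split; auto. intros y [[_ Hy1] Hy2]. apply Hd'. repeat split; auto.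
Qed.

Lemma derive_nonneg_le f df a b : a < b ->
  (forall x, a < x < b -> is_derive f x (df x)) -> (forall x, a < x < b -> 0 <= df x) ->
  (forall x, a <= x <= b -> continuity_pt f x) -> f a <= f b.
Proof.
  intros Hab Hd Hp Hc.
  set (df' := fun x => if Rlt_dec a x then if Rlt_dec x b then df x else 0 else 0).
  destruct (MVT_gen f a b df') as [c [Hc1 Hc2]]; rewrite Rmin_left, Rmax_right in * by lra.
  - intros x Hx. unfold df'.
    destruct (Rlt_dec a x); [|lra]. destruct (Rlt_dec x b); [|lra]. auto.
  - exact Hc.
  - assert (0 <= df' c); [|nra].
    unfold df'. destruct (Rlt_dec a c); [|lra]. destruct (Rlt_dec c b); [|lra]. apply Hp; lra.
Qed.

(* Extends functions given on [0, pi/2] continuously to the whole line. *)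
Definition clamp t := Rmax 0 (Rmin t (PI / 2)).

Lemma clamp_Icl t : Icl (clamp t).
Proof.
  unfold clamp, Icl. pose proof PI_RGT_0.
  split; [apply Rmax_l|]. apply Rmax_lub; [lra|apply Rmin_r].
Qed.

Lemma clamp_id t : Icl t -> clamp t = t.
Proof. unfold clamp, Icl; intros H. rewrite Rmin_left by lra. rewrite Rmax_right; lra. Qed.

Lemma clamp_lipschitz s t : Rabs (clamp s - clamp t) <= Rabs (s - t).
Proof.
  unfold clamp. pose proof PI_RGT_0.
  unfold Rmax, Rmin; repeat destruct Rle_dec; unfold Rabs; repeat destruct Rcase_abs; lra.
Qed.

Lemma continuity_pt_clamp f : (forall x, Icl x -> continue_in f Icl x) ->
  forall t, continuity_pt (fun t => f (clamp t)) t.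
Proof.
  intros Hf t eps Heps.
  destruct (Hf _ (clamp_Icl t) eps Heps) as [d [Hd Hd']].
  exists d; split; auto. intros y [_ Hy]. simpl in *. unfold R_dist in *.
  destruct (Req_dec (clamp y) (clamp t)) as [E|E].
  - rewrite E, Rminus_diag, Rabs_R0; lra.
  - apply Hd'. pose proof (clamp_lipschitz y t).
    split; [split; [apply clamp_Icl | auto] | lra].
Qed.

Lemma clamp_locally (f : R -> R) t : 0 < t < PI / 2 -> locally t (fun y => f y = f (clamp y)).
Proof.
  intros Ht. assert (Hp : 0 < Rmin t (PI / 2 - t)) by (apply Rmin_pos; lra).
  exists (mkposreal _ Hp). intros y Hy. change (Rabs (y - t) < Rmin t (PI / 2 - t)) in Hy.
  pose proof (Rmin_l t (PI / 2 - t)). pose proof (Rmin_r t (PI / 2 - t)).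
  rewrite clamp_id; auto. unfold Icl. unfold Rabs in Hy; destruct Rcase_abs in Hy; lra.
Qed.

Lemma Icl_bounded_below f : (forall t, Icl t -> continue_in f Icl t) ->
  exists m, forall t, Icl t -> m <= f t.
Proof.
  intros Hf. pose proof PI_RGT_0.
  destruct (continuity_ab_min (fun t => f (clamp t)) 0 (PI / 2)) as [t0 [Ht0 _]];
    [lra | intros; apply continuity_pt_clamp; auto |].
  exists (f (clamp t0)). intros t Ht. rewrite <- (clamp_id t Ht). apply Ht0, Ht.
Qed.

Lemma continuity_pt_F al h th : continuity_pt h th -> 0 < sin th ->
  continuity_pt (fun t => F al t (h t)) th.
Proof.
  intros Hh Hs. unfold F.
  assert (Hh2 : continuity_pt (fun t => h t ^ 2) th)
    by (simpl; repeat apply continuity_pt_mult; auto; apply continuity_pt_const; intros ? ?; auto).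
  apply continuity_pt_mult.
  - apply continuity_pt_opp, continuity_pt_div;
      [apply continuity_pt_const; intros ? ?; auto | apply continuity_sin | lra].
  - repeat first [exact Hh | exact Hh2 | apply continuity_cos | apply continuity_pt_minus
      | apply continuity_pt_plus | apply continuity_pt_mult
      | apply continuity_pt_const; intros ? ?; auto ].
Qed.

Lemma is_solution_intro al h : (forall th, Icl th -> continue_in h Icl th) ->
  (forall th, Iop th -> derivable_pt_lim h th (F al th (h th))) -> h 0 = 1 ->
  is_solution al h.
Proof.
  intros Hc Hd H0. exists (fun th => F al th (h th)). repeat split; auto.
  - apply deriv_within_of_derivable_pt_lim, Hd, H.
  - apply continue_in_of_continuity_pt, continuity_pt_F.
    + apply derivable_continuous_pt. exists (F al x (h x)). apply Hd, H.
    + destruct H. apply sin_gt_0; lra.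
Qed.

Lemma solution_supersolution al h : is_solution al h -> is_supersolution al h.
Proof.
  intros [hd [H1 [H2 H3]]]. exists hd. split; [exact H1 | split].
  - intros th Hth. rewrite H2; auto; lra.
  - lra.
Qed.

Definition hav th := (1 - cos th) / 2.

Lemma hav_0 : hav 0 = 0.
Proof. unfold hav. rewrite cos_0. field. Qed.

Lemma hav_PI2 : hav (PI / 2) = 1 / 2.
Proof. unfold hav. rewrite cos_PI2. field. Qed.

Lemma hav_Icl th : Icl th -> 0 <= hav th <= / 2.
Proof.
  intros [H1 H2]. unfold hav. pose proof PI_RGT_0.
  assert (0 <= cos th) by (apply cos_ge_0; lra). pose proof (COS_bound th). lra.
Qed.

Lemma hav_Iop th : Iop th -> 0 < hav th <= / 2.
Proof.
  intros Hth. pose proof (hav_Icl th ltac:(unfold Icl, Iop in *; lra)).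
  assert (Hs : 0 < sin th) by (apply sin_gt_0; unfold Iop in Hth; lra).
  pose proof (sin2_cos2 th) as E. unfold Rsqr in E. unfold hav in *.
  assert (cos th < 1) by nra. lra.
Qed.

Lemma is_derive_hav th : is_derive hav th (sin th / 2).
Proof. unfold hav. auto_derive; auto. rewrite Rmult_1_l, Ropp_involutive; reflexivity. Qed.

(* With x = hav th one has cos th = 1 - 2 x and sin th ^ 2 = 4 x (1 - x), so the
   Riccati equation in x becomes the equation of the problem in th. *)
Lemma riccati_change_of_variable al (Phi dPhi : R -> R) th : Iop th ->
  is_derive Phi (hav th) (dPhi (hav th)) ->
  2 * hav th * (1 - hav th) * dPhi (hav th)
    = - (al * Phi (hav th) ^ 2 - (1 - 2 * hav th) * Phi (hav th) + 1 - al) ->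
  derivable_pt_lim (fun t => Phi (hav t)) th (F al th (Phi (hav th))).
Proof.
  intros Hth Hd Hr.
  assert (Hs : 0 < sin th) by (apply sin_gt_0; unfold Iop in Hth; lra).
  assert (Eq : F al th (Phi (hav th)) = sin th / 2 * dPhi (hav th)).
  { unfold F. pose proof (sin2_cos2 th) as E.
    replace (cos th) with (1 - 2 * hav th) by (unfold hav; field).
    apply (Rmult_eq_reg_l (2 * sin th)); [|lra].
    replace (2 * sin th * (sin th / 2 * dPhi (hav th))) with (sin th ^ 2 * dPhi (hav th)) by field.
    replace (sin th ^ 2) with (4 * hav th * (1 - hav th)) by (unfold hav; unfold Rsqr in E; nra).
    field_simplify; [|lra]. nra. }
  apply is_derive_Reals. rewrite Eq. exact (is_derive_comp Phi hav th _ _ Hd (is_derive_hav th)).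
Qed.

(** * The comparison principle *)

Lemma continue_in_clamp f : (forall t, continuity_pt (fun t => f (clamp t)) t) ->
  forall x, Icl x -> continue_in f Icl x.
Proof.
  intros Hf x Hx eps Heps. destruct (Hf x eps Heps) as [d [Hd Hd']].
  exists d; split; auto. intros y [[Hy Hyx] Hyd].
  rewrite <- (clamp_id x Hx), <- (clamp_id y Hy). apply Hd'. repeat split; auto.
Qed.

Lemma last_nonneg_point f a b : a < b ->
  (forall t, a <= t <= b -> continuity_pt f t) -> 0 <= f a -> f b < 0 ->
  exists s, a <= s < b /\ 0 <= f s /\ forall t, s < t <= b -> f t < 0.
Proof.
  intros Hab Hc Ha Hb.
  set (E := fun t => a <= t <= b /\ 0 <= f t).
  destruct (completeness E) as [s [Hub Hlub]].
  { exists b. intros t [Ht _]. lra. }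
  { exists a. split; [lra | exact Ha]. }
  assert (Has : a <= s) by (apply Hub; split; [lra | exact Ha]).
  assert (Hsb : s <= b) by (apply Hlub; intros t [Ht _]; lra).
  assert (Hfs : 0 <= f s).
  { destruct (Rle_lt_dec 0 (f s)) as [|Hn]; auto. exfalso.
    destruct (Hc s ltac:(lra) (- f s) ltac:(lra)) as [del [Hdel Hdel']].
    assert (Hub2 : is_upper_bound E (s - del / 2)).
    { intros t [Ht Hft]. destruct (Rle_lt_dec t (s - del / 2)) as [|Hgt]; auto. exfalso.
      assert (t <= s) by (apply Hub; split; auto).
      destruct (Req_dec t s) as [->|Hts]; [lra|].
      assert (Habs : Rabs (t - s) < del) by (rewrite Rabs_left; lra).
      specialize (Hdel' t (conj (conj I (not_eq_sym Hts)) Habs)).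
      simpl in Hdel'. unfold R_dist in Hdel'.
      unfold Rabs in Hdel'; destruct Rcase_abs in Hdel'; lra. }
    specialize (Hlub _ Hub2). lra. }
  exists s. repeat split; auto.
  - destruct (Req_dec s b) as [->|]; lra.
  - intros t Ht. destruct (Rlt_le_dec (f t) 0) as [|Hn]; auto.
    assert (t <= s) by (apply Hub; split; [lra | exact Hn]). lra.
Qed.

Lemma sin_quotient_bounded_below N : (forall t, Icl t -> continue_in N Icl t) -> 0 < N 0 ->
  exists M, forall t, Iop t -> - M <= N t / sin t.
Proof.
  intros HN HN0. pose proof PI_RGT_0.
  destruct (HN 0 ltac:(unfold Icl; lra) (N 0) HN0) as [del0 [Hdel0 Hpos]].
  assert (Hpos' : forall t, Icl t -> t < del0 -> 0 < N t).
  { intros t Ht Htd. destruct (Req_dec t 0) as [->|Ht0]; auto.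
    assert (Habs : Rabs (t - 0) < del0) by (unfold Icl in Ht; rewrite Rminus_0_r, Rabs_pos_eq; lra).
    specialize (Hpos t (conj (conj Ht (not_eq_sym Ht0)) Habs)). simpl in Hpos.
    unfold R_dist, Rabs in Hpos. destruct Rcase_abs in Hpos; lra. }
  destruct (Icl_bounded_below N HN) as [m Hm].
  pose proof (Rmin_l del0 (PI / 2)). pose proof (Rmin_r del0 (PI / 2)).
  pose proof (Rmin_pos del0 (PI / 2) Hdel0 ltac:(lra)).
  set (del1 := Rmin del0 (PI / 2)) in *.
  assert (Hsd1 : 0 < sin del1) by (apply sin_gt_0; lra).
  exists (Rabs m / sin del1). intros t Ht. unfold Iop in Ht.
  assert (Hst : 0 < sin t) by (apply sin_gt_0; lra).
  assert (0 <= Rabs m) by apply Rabs_pos. pose proof (Rle_abs (- m)). rewrite Rabs_Ropp in *.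
  assert (0 < / sin t) by (apply Rinv_0_lt_compat; lra).
  assert (0 < / sin del1) by (apply Rinv_0_lt_compat; lra).
  destruct (Rle_lt_dec 0 (N t)) as [HNt|HNt]; unfold Rdiv.
  - nra.
  - assert (Htd : del0 <= t).
    { destruct (Rle_lt_dec del0 t); auto. pose proof (Hpos' t ltac:(unfold Icl; lra)). lra. }
    assert (sin del1 <= sin t) by (apply sin_incr_1; lra).
    assert (/ sin t <= / sin del1) by (apply Rinv_le_contravar; lra).
    assert (m <= N t) by (apply Hm; unfold Icl; lra).
    nra.
Qed.

Lemma gronwall_lower d d' M a b : a < b ->
  (forall t, a < t < b -> is_derive d t (d' t)) -> (forall t, a < t < b -> M * d t <= d' t) ->
  (forall t, a <= t <= b -> continuity_pt d t) ->
  d a * exp (- (M * a)) <= d b * exp (- (M * b)).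
Proof.
  intros Hab Hd Hge Hc.
  apply (derive_nonneg_le (fun t => d t * exp (- (M * t)))
    (fun t => (d' t - M * d t) * exp (- (M * t)))); auto.
  - intros t Ht.
    assert (Hexp : is_derive (fun y => exp (- (M * y))) t (- M * exp (- (M * t))))
      by (auto_derive; auto; ring).
    apply (is_derive_ext (fun t => d t * exp (- (M * t)))); [reflexivity|].
    replace ((d' t - M * d t) * exp (- (M * t)))
      with (d' t * exp (- (M * t)) + d t * (- M * exp (- (M * t)))) by ring.
    exact (is_derive_mult _ _ t _ _ (Hd t Ht) Hexp (fun n m => Rmult_comm n m)).
  - intros t Ht. pose proof (exp_pos (- (M * t))). specialize (Hge t Ht). nra.
  - intros t Ht. apply continuity_pt_mult; auto.
    apply derivable_continuous_pt. exists (- M * exp (- (M * t))).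
    apply is_derive_Reals. auto_derive; auto. ring.
Qed.

Lemma F_difference al t x y : sin t <> 0 ->
  F al t x - F al t y = - ((al * (x + y) - cos t) / sin t) * (x - y).
Proof. intros Hs. unfold F. field. exact Hs. Qed.

Lemma comparison al h hb : 1 / 2 < al < 1 -> is_solution al h -> is_supersolution al hb ->
  forall th, Icl th -> h th <= hb th.
Proof.
  intros Hal [hd [[Hc Hdv] [Hode H0]]] [hbd [[Hbc Hbdv] [Hbode Hb0]]] th Hth.
  destruct (Rle_lt_dec (h th) (hb th)) as [|Hlt]; auto. exfalso.
  pose proof PI_RGT_0. pose proof Hth as [Hth0 HthP].
  set (d := fun t => hb t - h t).
  assert (Hdc : forall t, continuity_pt (fun t => d (clamp t)) t)
    by (intros t; apply continuity_pt_minus; apply continuity_pt_clamp; auto).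
  assert (Hth0' : 0 < th) by (destruct (Req_dec th 0) as [->|]; lra).
  destruct (last_nonneg_point (fun t => d (clamp t)) 0 th) as [s [Hs [Hds Hneg]]]; auto.
  { rewrite clamp_id by (unfold Icl; lra). unfold d; lra. }
  { rewrite clamp_id by auto. unfold d; lra. }
  rewrite clamp_id in Hds by (unfold Icl; lra).
  set (N := fun t => al * (hb t + h t) - cos t).
  destruct (sin_quotient_bounded_below N) as [M HM].
  { apply continue_in_clamp. intros t. unfold N.
    apply continuity_pt_minus;
      [|apply (continuity_pt_clamp cos); intros; apply continue_in_of_continuity_pt, continuity_cos].
    apply continuity_pt_mult; [apply continuity_pt_const; intros ? ?; auto|].
    apply continuity_pt_plus; apply continuity_pt_clamp; auto. }
  { unfold N. rewrite cos_0, H0. nra. }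
  assert (Hinc : d (clamp s) * exp (- (M * s)) <= d (clamp th) * exp (- (M * th))).
  { apply (gronwall_lower (fun t => d (clamp t)) (fun t => hbd t - hd t)); [lra | | |].
    - intros t Ht. apply (is_derive_ext_loc d); [apply clamp_locally; lra|].
      apply (is_derive_minus hb h); apply is_derive_Reals, derivable_pt_lim_of_deriv_within;
        try lra; [apply Hbdv | apply Hdv]; unfold Iop; lra.
    - intros t Ht. rewrite clamp_id by (unfold Icl; lra).
      assert (Hdt : d t < 0) by (rewrite <- (clamp_id t) by (unfold Icl; lra); apply Hneg; lra).
      assert (HIt : Iop t) by (unfold Iop; lra).
      assert (Hst : 0 < sin t) by (apply sin_gt_0; lra).
      specialize (Hbode t HIt). specialize (Hode t HIt). specialize (HM t HIt).
      pose proof (F_difference al t (hb t) (h t) ltac:(lra)) as Hkey. fold (N t) in Hkey.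
      unfold d in *. nra.
    - intros t _. apply Hdc. }
  rewrite !clamp_id in Hinc by (unfold Icl; lra).
  assert (0 < exp (- (M * s))) by apply exp_pos.
  assert (0 < exp (- (M * th))) by apply exp_pos.
  unfold d in *. nra.
Qed.

(** * The case 1/2 < al < 1 *)

Definition hsol al th := ric al (hav th).

Lemma hsol_solution al : 0 < al <= 1 -> is_solution al (hsol al).
Proof.
  intros Hal. apply is_solution_intro.
  - intros th Hth. apply continue_in_of_continuity_pt, derivable_continuous_pt.
    exists (sin th / 2 * ric' al (hav th)). apply is_derive_Reals.
    pose proof (hav_Icl th Hth).
    exact (is_derive_comp (ric al) hav th _ _ (is_derive_ric al Hal (hav th) ltac:(lra)) (is_derive_hav th)).
  - intros th Hth. pose proof (hav_Iop th Hth).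
    apply (riccati_change_of_variable al (ric al) (ric' al)); auto.
    + apply is_derive_ric; auto; lra.
    + apply ric_riccati; auto; lra.
  - unfold hsol. rewrite hav_0. apply ric_0.
Qed.

Lemma solution_unique al g h : 1 / 2 < al < 1 -> is_solution al g -> is_solution al h ->
  forall th, Icl th -> g th = h th.
Proof.
  intros Hal Hg Hh th Hth. apply Rle_antisym; apply (comparison al);
    auto using solution_supersolution.
Qed.

Lemma solution_bounds al h : 1 / 2 < al < 1 -> is_solution al h ->
  forall th, Iop th -> 0 < h th < 1.
Proof.
  intros Hal Hh th Hth.
  rewrite (solution_unique al h (hsol al)) by (auto; try apply hsol_solution; unfold Icl, Iop in *; lra).
  apply ric_bounds; [lra | lra | apply hav_Iop, Hth].
Qed.

Lemma F_alpha_difference a1 a2 t x : sin t <> 0 ->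
  F a2 t x - F a1 t x = (a2 - a1) * (1 - x ^ 2) / sin t.
Proof. intros Hs. unfold F. field. exact Hs. Qed.

(* Between 0 and 1 the right-hand side of the equation increases with al. *)
Lemma solution_supersolution_lt a1 a2 h : 1 / 2 < a2 < 1 -> a1 <= a2 ->
  is_solution a2 h -> is_supersolution a1 h.
Proof.
  intros Ha2 Ha12 Hh. pose proof (solution_bounds a2 h Ha2 Hh) as Hb.
  destruct Hh as [hd [Hh [Hode H0]]]. exists hd. split; [exact Hh | split; [|lra]].
  intros t Ht. rewrite Hode by exact Ht. specialize (Hb t Ht).
  assert (0 < sin t) by (apply sin_gt_0; unfold Iop in Ht; pose proof PI_RGT_0; lra).
  pose proof (F_alpha_difference a1 a2 t (h t) ltac:(lra)).
  assert (0 <= (a2 - a1) * (1 - h t ^ 2) / sin t) by (apply Rdiv_le_0_compat; [apply Rmult_le_pos; nra | lra]).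
  lra.
Qed.

Lemma deriv_within_nonpos_at_zero g th l : Iop th ->
  (forall t, Icl t -> 0 <= g t) -> g th = 0 -> deriv_within g Icl th l -> l <= 0.
Proof.
  intros Hth Hg Hg0 Hd. destruct (Rle_lt_dec l 0) as [|Hl]; auto. exfalso.
  destruct (Hd l Hl) as [del [Hdel Hq]]. unfold Iop in Hth.
  set (y := th - Rmin del th / 2).
  pose proof (Rmin_l del th). pose proof (Rmin_r del th). pose proof (Rmin_pos del th Hdel ltac:(lra)).
  assert (Hy : Icl y) by (unfold Icl, y; lra).
  assert (Hyd : Rabs (y - th) < del) by (unfold y; rewrite Rabs_left; lra).
  specialize (Hq y Hy ltac:(unfold y; lra) Hyd).
  assert (0 <= (g y - g th) / (th - y)) by (apply Rdiv_le_0_compat; [rewrite Hg0, Rminus_0_r; auto | unfold y; lra]).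
  replace ((g y - g th) / (y - th)) with (- ((g y - g th) / (th - y))) in Hq by (field; unfold y; lra).
  unfold Rabs in Hq; destruct Rcase_abs in Hq; lra.
Qed.

(* At a contact point th the gap h2 - h1 >= 0 would have left derivative
   (a2 - a1)(1 - h2 th ^ 2)/sin th > 0. *)
Lemma solution_strict_mono a1 a2 h1 h2 : 1 / 2 < a1 -> a1 < a2 -> a2 < 1 ->
  is_solution a1 h1 -> is_solution a2 h2 -> forall th, Iop th -> h1 th < h2 th.
Proof.
  intros H1 H12 H2 Hs1 Hs2 th Hth.
  assert (Hsup : is_supersolution a1 h2) by (apply (solution_supersolution_lt a1 a2); auto; lra).
  assert (Hge : forall t, Icl t -> 0 <= h2 t - h1 t)
    by (intros t Ht; pose proof (comparison a1 h1 h2 ltac:(lra) Hs1 Hsup t Ht); lra).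
  destruct (Rle_lt_dec (h2 th) (h1 th)) as [Hle|]; auto. exfalso.
  assert (Heq : h2 th - h1 th = 0) by (pose proof (Hge th ltac:(unfold Icl, Iop in *; lra)); lra).
  pose proof (solution_bounds a2 h2 ltac:(lra) Hs2 th Hth) as Hb.
  assert (Hs : 0 < sin th) by (apply sin_gt_0; unfold Iop in Hth; pose proof PI_RGT_0; lra).
  destruct Hs1 as [hd1 [[_ Hd1] [Ho1 _]]]. destruct Hs2 as [hd2 [[_ Hd2] [Ho2 _]]].
  pose proof (deriv_within_nonpos_at_zero _ th _ Hth Hge Heq
    (deriv_within_minus _ _ _ _ _ _ (proj1 (Hd2 th Hth)) (proj1 (Hd1 th Hth)))) as Hl.
  rewrite Ho1, Ho2 in Hl by exact Hth. replace (h1 th) with (h2 th) in Hl by lra.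
  rewrite (F_alpha_difference a1 a2 th) in Hl by lra.
  assert (0 < (a2 - a1) * (1 - h2 th ^ 2) / sin th) by (apply Rdiv_lt_0_compat; [apply Rmult_lt_0_compat; nra | lra]).
  lra.
Qed.

(** * The case al = 1/2 *)

Lemma half_range : 0 < 1 / 2 <= 1.
Proof. lra. Qed.

Definition J_integrand x := / (x * (1 - x) * hgeom (1 / 2) x ^ 2).
Definition J x := RInt J_integrand x (1 / 2).

Lemma J_integrand_continuous x : 0 < x < 1 -> continuous J_integrand x.
Proof.
  intros Hx. apply (ex_derive_continuous J_integrand).
  pose proof (is_derive_hgeom _ half_range x ltac:(rewrite Rabs_pos_eq; lra)) as H0.
  pose proof (hgeom_ge_1 _ half_range x ltac:(lra)).
  unfold J_integrand. auto_derive. repeat split.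
  - eexists; exact H0.
  - assert (0 < x * (1 - x) * (hgeom (1/2) x * (hgeom (1/2) x * 1))); [|lra].
    repeat apply Rmult_lt_0_compat; lra.
Qed.

Lemma ex_RInt_J_integrand a b : 0 < a < 1 -> 0 < b < 1 -> ex_RInt J_integrand a b.
Proof.
  intros Ha Hb. apply (ex_RInt_continuous (V:=R_CompleteNormedModule)).
  intros z Hz. apply J_integrand_continuous.
  destruct (Rle_dec a b);
    [rewrite Rmin_left, Rmax_right in Hz by lra | rewrite Rmin_right, Rmax_left in Hz by lra]; lra.
Qed.

Lemma is_derive_J x : 0 < x < 1 -> is_derive J x (- J_integrand x).
Proof.
  intros Hx.
  assert (Hp : 0 < Rmin x (1 - x)) by (apply Rmin_pos; lra).
  assert (Hloc : forall y, Rabs (y - x) < Rmin x (1 - x) -> 0 < y < 1).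
  { intros y Hy. pose proof (Rmin_l x (1 - x)). pose proof (Rmin_r x (1 - x)).
    unfold Rabs in Hy; destruct Rcase_abs in Hy; lra. }
  set (K := fun y => RInt J_integrand (1 / 2) y).
  assert (HK : is_derive K x (J_integrand x)).
  { apply (is_derive_RInt J_integrand K (1 / 2) x); [|apply J_integrand_continuous; auto].
    exists (mkposreal _ Hp). intros y Hy.
    apply (RInt_correct (V:=R_CompleteNormedModule)), ex_RInt_J_integrand; [lra | apply Hloc, Hy]. }
  apply (is_derive_ext_loc (fun y => - K y)); [|exact (is_derive_opp K x _ HK)].
  exists (mkposreal _ Hp). intros y Hy.
  unfold J, K. symmetry. rewrite <- (opp_RInt_swap (V:=R_CompleteNormedModule)); [reflexivity|].
  apply ex_RInt_J_integrand; [lra | apply Hloc, Hy].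
Qed.

Lemma J_half : J (1 / 2) = 0.
Proof. unfold J. rewrite RInt_point. reflexivity. Qed.

(* Uses f <= 1 / (1 - x), so that x (1 - x) f ^ 2 <= x / (1 - x) <= 2 x on (0, 1/2]. *)
Lemma J_integrand_lb x : 0 < x <= 1 / 2 -> / (2 * x) <= J_integrand x.
Proof.
  intros Hx. unfold J_integrand.
  pose proof (hgeom_ge_1 _ half_range x ltac:(lra)) as H1.
  pose proof (hgeom_le_geom _ half_range x ltac:(lra)) as H2.
  apply Rinv_le_contravar; [apply Rmult_lt_0_compat; [apply Rmult_lt_0_compat; lra | apply pow_lt; lra]|].
  assert (Hq : hgeom (1/2) x * (1 - x) <= 1).
  { apply (Rmult_le_compat_r (1 - x)) in H2; [|lra]. rewrite Rinv_l in H2 by lra. lra. }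
  simpl. rewrite Rmult_1_r. nra.
Qed.

Lemma J_lb x : 0 < x <= 1 / 2 -> - ln (2 * x) / 2 <= J x.
Proof.
  intros Hx. destruct (Req_dec x (1 / 2)) as [->|Hne].
  { rewrite J_half. replace (2 * (1/2)) with 1 by field. rewrite ln_1. lra. }
  set (psi := fun y => - J y - ln (2 * y) / 2).
  assert (Hd : forall y, 0 < y < 1 -> is_derive psi y (J_integrand y - / (2 * y))).
  { intros y Hy. unfold psi. pose proof (is_derive_J y Hy) as HJ.
    auto_derive; [repeat split; [eexists; exact HJ | lra] |].
    replace (Derive (fun x : R => J x) y) with (- J_integrand y)
      by (symmetry; apply is_derive_unique; exact HJ).
    field. lra. }
  assert (Hle : psi x <= psi (1 / 2)).
  { apply (derive_nonneg_le psi (fun y => J_integrand y - / (2 * y))); [lra | | |].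
    - intros y Hy. apply Hd. lra.
    - intros y Hy. pose proof (J_integrand_lb y ltac:(lra)). lra.
    - intros y Hy. apply derivable_continuous_pt. exists (J_integrand y - / (2 * y)).
      apply is_derive_Reals, Hd. lra. }
  unfold psi in Hle. rewrite J_half in Hle. replace (2 * (1/2)) with 1 in Hle by field.
  rewrite ln_1 in Hle. lra.
Qed.

Lemma J_nonneg x : 0 < x <= 1 / 2 -> 0 <= J x.
Proof.
  intros Hx. pose proof (J_lb x Hx).
  assert (ln (2 * x) <= 0); [|lra].
  rewrite <- ln_1. destruct (Req_dec x (1/2)) as [->|]; [right; f_equal; field|].
  left. apply ln_increasing; lra.
Qed.

Lemma J_large K : exists eta, 0 < eta /\ forall x, 0 < x < eta -> K < J x.
Proof.
  exists (Rmin (exp (- (2 * K)) / 2) (1 / 2)).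
  pose proof (exp_pos (- (2 * K))). pose proof (Rmin_l (exp (- (2 * K)) / 2) (1 / 2)).
  pose proof (Rmin_r (exp (- (2 * K)) / 2) (1 / 2)).
  split; [apply Rmin_pos; lra|]. intros x Hx.
  assert (ln (2 * x) < - (2 * K)); [|pose proof (J_lb x ltac:(lra)); lra].
  rewrite <- (ln_exp (- (2 * K))). apply ln_increasing; lra.
Qed.

(* Positivity of the solutions below needs C > 16. *)
Definition Cst c := 17 + exp c.

Definition Gc c x := ric (1 / 2) x - 4 / (hgeom (1 / 2) x ^ 2 * (Cst c + J x)).

Definition Gc' c x := ric' (1 / 2) x
  + 4 * (2 * hgeom (1/2) x * hgeom1 (1/2) x * (Cst c + J x) - hgeom (1/2) x ^ 2 * J_integrand x)
    / (hgeom (1/2) x ^ 2 * (Cst c + J x)) ^ 2.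

Lemma Cst_gt_16 c : 16 < Cst c.
Proof. unfold Cst. pose proof (exp_pos c). lra. Qed.

Lemma is_derive_Gc c x : 0 < x <= 1 / 2 -> is_derive (Gc c) x (Gc' c x).
Proof.
  intros Hx. pose proof (is_derive_hgeom _ half_range x ltac:(rewrite Rabs_pos_eq; lra)) as H0.
  pose proof (is_derive_ric _ half_range x ltac:(lra)) as HG.
  pose proof (is_derive_J x ltac:(lra)) as HJ.
  pose proof (hgeom_ge_1 _ half_range x ltac:(lra)). pose proof (J_nonneg x Hx). pose proof (Cst_gt_16 c).
  unfold Gc. auto_derive.
  - repeat split; try (eexists; eassumption).
    assert (0 < hgeom (1/2) x * (hgeom (1/2) x * 1) * (Cst c + J x)) by (apply Rmult_lt_0_compat; nra).
    lra.
  - replace (Derive (fun y => ric (1/2) y) x) with (ric' (1/2) x)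
      by (symmetry; apply is_derive_unique; exact HG).
    replace (Derive (fun y => hgeom (1/2) y) x) with (hgeom1 (1/2) x)
      by (symmetry; apply is_derive_unique; exact H0).
    replace (Derive (fun y => J y) x) with (- J_integrand x)
      by (symmetry; apply is_derive_unique; exact HJ).
    match goal with |- ?a = ?b => change (@eq R a b) end.
    unfold Gc'. field. lra.
Qed.

Lemma Gc_riccati c x : 0 < x <= 1 / 2 ->
  2 * x * (1 - x) * Gc' c x = - (1 / 2 * Gc c x ^ 2 - (1 - 2 * x) * Gc c x + 1 - 1 / 2).
Proof.
  intros Hx. pose proof (ric_riccati _ half_range x ltac:(lra)) as Hr.
  pose proof (hgeom_ge_1 _ half_range x ltac:(lra)). pose proof (J_nonneg x Hx). pose proof (Cst_gt_16 c).
  unfold Gc'. rewrite Rmult_plus_distr_l, Hr. unfold Gc, ric, J_integrand. field. repeat split; lra.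
Qed.

Lemma Gc_pos c x : 0 < x <= 1 / 2 -> 0 < Gc c x.
Proof.
  intros Hx. pose proof (J_nonneg x Hx). pose proof (Cst_gt_16 c).
  pose proof (hgeom_ge_1 _ half_range x ltac:(lra)) as Hf.
  pose proof (hgeom1_ge _ half_range x ltac:(lra)) as Hf1.
  replace (hgeom_coef (1/2) 1) with (1 / 4) in Hf1 by (simpl; field).
  set (f := hgeom (1/2) x) in *. set (f1 := hgeom1 (1/2) x) in *.
  assert (Hg : 1 / 4 <= ric (1/2) x * f ^ 2).
  { unfold ric. fold f f1.
    replace ((1 - 2 * x + 2 * x * (1 - x) * f1 / (1 / 2 * f)) * f ^ 2)
      with ((1 - 2 * x) * f ^ 2 + 4 * x * (1 - x) * (f1 * f)) by (field; lra).
    assert (1 <= f ^ 2) by (simpl; nra).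
    assert (1 - 2 * x <= (1 - 2 * x) * f ^ 2)
      by (rewrite <- (Rmult_1_r (1 - 2 * x)) at 1; apply Rmult_le_compat_l; lra).
    assert (1 / 4 <= f1 * f) by nra. assert (0 <= x * (1 - x)) by nra.
    assert (x * (1 - x) <= 4 * x * (1 - x) * (f1 * f)) by nra.
    nra. }
  unfold Gc. fold f.
  assert (0 < f ^ 2 * (Cst c + J x)) by (apply Rmult_lt_0_compat; nra).
  apply (Rmult_lt_reg_r (f ^ 2 * (Cst c + J x))); auto. rewrite Rmult_0_l.
  replace ((ric (1 / 2) x - 4 / (f ^ 2 * (Cst c + J x))) * (f ^ 2 * (Cst c + J x)))
    with (ric (1/2) x * f ^ 2 * (Cst c + J x) - 4) by (field; lra).
  nra.
Qed.

Lemma Gc_near_0 c eps : 0 < eps ->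
  exists eta, 0 < eta /\ forall x, 0 < x < eta -> Rabs (Gc c x - 1) < eps.
Proof.
  intros Heps.
  assert (Hric : continuity_pt (ric (1/2)) 0).
  { apply derivable_continuous_pt. exists (ric' (1/2) 0).
    apply is_derive_Reals, is_derive_ric; [apply half_range | lra]. }
  destruct (Hric (eps / 2) ltac:(lra)) as [e1 [He1 Hric']].
  destruct (J_large (8 / eps)) as [e2 [He2 HJ]].
  exists (Rmin (Rmin e1 e2) (1 / 2)). split; [repeat apply Rmin_pos; lra|]. intros x Hx.
  pose proof (Rmin_l (Rmin e1 e2) (1 / 2)). pose proof (Rmin_r (Rmin e1 e2) (1 / 2)).
  pose proof (Rmin_l e1 e2). pose proof (Rmin_r e1 e2).
  assert (Hx0 : 0 <> x) by lra.
  assert (Hdx : dist R_met x 0 < e1)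
    by (simpl; unfold R_dist; rewrite Rminus_0_r, Rabs_pos_eq; lra).
  specialize (Hric' x (conj (conj I Hx0) Hdx)).
  simpl in Hric'. unfold R_dist in Hric'. rewrite ric_0 in Hric'.
  specialize (HJ x ltac:(lra)).
  pose proof (hgeom_ge_1 _ half_range x ltac:(lra)). pose proof (Cst_gt_16 c).
  assert (Hsmall : 0 <= 4 / (hgeom (1/2) x ^ 2 * (Cst c + J x)) < eps / 2).
  { assert (1 <= hgeom (1/2) x ^ 2) by nra.
    assert (0 < 8 / eps) by (apply Rdiv_lt_0_compat; lra).
    split; [left; apply Rdiv_lt_0_compat; [lra | apply Rmult_lt_0_compat; nra]|].
    apply Rle_lt_trans with (4 / J x).
    - apply Rmult_le_compat_l; [lra|]. apply Rinv_le_contravar; nra.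
    - apply (Rmult_lt_reg_r (J x)); [lra|]. unfold Rdiv in *.
      rewrite Rmult_assoc, Rinv_l, Rmult_1_r by lra.
      apply (Rmult_lt_reg_l (/ eps)); [apply Rinv_0_lt_compat; lra|].
      replace (/ eps * 4) with (8 * / eps * / 2) by (field; lra).
      replace (/ eps * (eps * / 2 * J x)) with (J x * / 2) by (field; lra). lra. }
  unfold Gc. revert Hric'. unfold Rabs. repeat destruct Rcase_abs; lra.
Qed.

(* Gc c is singular at x = 0, where J blows up; the value 1 at th = 0 is set by hand. *)
Definition Hc c th := if Rle_dec th 0 then 1 else Gc c (hav th).

Lemma Hc_pos_eq c th : 0 < th -> Hc c th = Gc c (hav th).
Proof. intros Hth. unfold Hc. destruct (Rle_dec th 0); [lra | reflexivity]. Qed.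

Lemma Hc_derivable c th : Iop th -> derivable_pt_lim (Hc c) th (F (1 / 2) th (Hc c th)).
Proof.
  intros Hth. pose proof (hav_Iop th Hth). rewrite Hc_pos_eq by apply Hth.
  apply is_derive_Reals. apply (is_derive_ext_loc (fun t => Gc c (hav t))).
  - exists (mkposreal _ (proj1 Hth)). intros y Hy. change (Rabs (y - th) < th) in Hy.
    symmetry. apply Hc_pos_eq. unfold Rabs in Hy; destruct Rcase_abs in Hy; lra.
  - apply is_derive_Reals, (riccati_change_of_variable (1/2) (Gc c) (Gc' c)); auto.
    + apply is_derive_Gc; lra.
    + apply Gc_riccati; lra.
Qed.

Lemma Hc_continuous_0 c : continue_in (Hc c) Icl 0.
Proof.
  intros eps Heps. destruct (Gc_near_0 c eps Heps) as [eta [Heta Hnear]].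
  assert (Hhav : continuity_pt hav 0).
  { apply derivable_continuous_pt. exists (sin 0 / 2). apply is_derive_Reals, is_derive_hav. }
  destruct (Hhav eta Heta) as [d [Hd Hd']].
  exists d; split; auto. intros t [[Ht Ht0] Htd].
  assert (Htpos : Iop t) by (unfold Icl, Iop in *; lra).
  pose proof (hav_Iop t Htpos).
  specialize (Hd' t (conj (conj I Ht0) Htd)). simpl in *. unfold R_dist in *.
  rewrite hav_0, Rminus_0_r, Rabs_pos_eq in Hd' by lra.
  rewrite Hc_pos_eq by (unfold Iop in Htpos; lra).
  unfold Hc. destruct (Rle_dec 0 0); [|lra]. apply Hnear; lra.
Qed.

Lemma Hc_solution c : is_solution (1 / 2) (Hc c).
Proof.
  apply is_solution_intro.
  - intros th Hth. destruct (Req_dec th 0) as [->|Hne]; [apply Hc_continuous_0|].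
    apply continue_in_of_continuity_pt, derivable_continuous_pt.
    exists (F (1/2) th (Hc c th)). apply Hc_derivable. unfold Icl, Iop in *; lra.
  - exact (Hc_derivable c).
  - unfold Hc. destruct (Rle_dec 0 0); [reflexivity | lra].
Qed.

Lemma Hc_pos c th : Icl th -> 0 < Hc c th.
Proof.
  intros Hth. unfold Hc. destruct (Rle_dec th 0); [lra|].
  apply Gc_pos. pose proof (hav_Iop th ltac:(unfold Icl, Iop in *; lra)). lra.
Qed.

Lemma Hc_injective c1 c2 : c1 <> c2 -> Hc c1 (PI / 2) <> Hc c2 (PI / 2).
Proof.
  intros Hne Heq. apply Hne, exp_inv. pose proof PI_RGT_0.
  rewrite !Hc_pos_eq, hav_PI2 in Heq by lra. unfold Gc in Heq. rewrite J_half, !Rplus_0_r in Heq.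
  pose proof (hgeom_ge_1 _ half_range (1 / 2) ltac:(lra)).
  assert (0 < hgeom (1/2) (1/2) ^ 2) by (simpl; nra).
  pose proof (Cst_gt_16 c1). pose proof (Cst_gt_16 c2).
  assert (E : / (hgeom (1/2) (1/2) ^ 2 * Cst c1) = / (hgeom (1/2) (1/2) ^ 2 * Cst c2))
    by (unfold Rdiv in Heq; lra).
  apply Rinv_eq_reg, Rmult_eq_reg_l in E; [unfold Cst in E; lra | lra].
Qed.

Theorem lemma3 :
  (* (i) existence and uniqueness for alpha in (1/2,1) *)
  (forall alpha : R, 1/2 < alpha < 1 ->
     exists h : R -> R, is_solution alpha h /\
       forall g : R -> R, is_solution alpha g -> forall th, Icl th -> g th = h th) /\
  (* (i) strict monotonicity in alpha *)
  (forall (a1 a2 : R) (h1 h2 : R -> R), 1/2 < a1 -> a1 < a2 -> a2 < 1 ->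
     is_solution a1 h1 -> is_solution a2 h2 ->
     forall th, Iop th -> h1 th < h2 th) /\
  (* (ii) a continuum of distinct positive solutions for alpha = 1/2 *)
  (exists H : R -> R -> R,
     (forall c : R, is_solution (1/2) (H c) /\ forall th, Icl th -> H c th > 0) /\
     (forall c1 c2 : R, c1 <> c2 -> exists th, Icl th /\ H c1 th <> H c2 th)) /\
  (* (iii) comparison with supersolutions *)
  (forall (alpha : R) (h hb : R -> R), 1/2 < alpha < 1 ->
     is_solution alpha h -> is_supersolution alpha hb ->
     forall th, Icl th -> h th <= hb th).
Proof.
  split; [|split; [|split]].
  - intros al Hal. exists (hsol al). split; [apply hsol_solution; lra|].
    intros g Hg. apply (solution_unique al); auto. apply hsol_solution; lra.
  - exact solution_strict_mono.
  - exists Hc. split.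
    + intros c. split; [apply Hc_solution | intros th Hth; apply Hc_pos, Hth].
    + intros c1 c2 Hne. exists (PI / 2). split; [|apply Hc_injective, Hne].
      unfold Icl. pose proof PI_RGT_0. lra.
  - exact comparison.
Qed.
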